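(* Let $k\ge3$ be odd, let $G=(V,E)$ be a $k$-uniform power hypergraph, and let $\mathbf x\in\mathbb R^n$ be an H-eigenvector of its Laplacian tensor $\mathcal L$ corresponding to an H-eigenvalue $\lambda>1$. Let $e\in E$. (i) If $e$ has exactly one intersectional vertex $i$ and $x_s\neq0$ for some cored vertex $s\in e$, then $x_ix_s<0$. (ii) If $e$ has exactly two intersectional vertices $i$ and $j$ and $x_s\neq0$ for some cored vertex $s\in e$, then $x_ix_j<0$.
   Context: A $k$-uniform power hypergraph is the $k$-th power $H^k$ of a simple graph $H=(V_H,E_H)$: for each edge $e\in E_H$ add $k-2$ new distinct vertices $i_{e,1},\ldots,i_{e,k-2}$ (different for different edges and not in $V_H$), and take as edges the sets $e\cup\{i_{e,1},\ldots,i_{e,k-2}\}$, $e\in E_H$. For a $k$-uniform hypergraph with vertex set $[n]$, $d_i$ is the number of edges containing $i$; a vertex of degree one is a cored vertex and a vertex of degree larger than one is an intersectional vertex. The Laplacian tensor $\mathcal L=\mathcal D-\mathcal A$ ($\mathcal D$ diagonal with entries $d_i$, $\mathcal A$ with entries $\frac1{(k-1)!}$ at index tuples forming an edge and $0$ otherwise) satisfies $(\mathcal L\mathbf x^{k-1})_i=d_ix_i^{k-1}-\sum_{e\ni i}\prod_{s\in e\setminus\{i\}}x_s$. A real $\lambda$ is an H-eigenvalue with H-eigenvector $\mathbf x\neq0$ if $(\mathcal L\mathbf x^{k-1})_i=\lambda x_i^{k-1}$ for all $i$. *)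

From HB Require Import structures.
From mathcomp Require Import all_boot all_order all_algebra.
From mathcomp Require Import reals.
Set Implicit Arguments. Unset Strict Implicit. Unset Printing Implicit Defensive.
Import Order.TTheory GRing.Theory Num.Theory.
Local Open Scope ring_scope.

(* G = (['I_n], E) is (isomorphic to) the k-th power H^k of a simple graph
   H = (VH, EH): the vertices of H form a subset VH of 'I_n, the edges of H are
   2-subsets of VH, each edge g of H gets k-2 new vertices [ext g] (not in VH,
   pairwise disjoint for distinct edges), every vertex of G is either in VH or
   one of the added vertices, and the edges of G are exactly g :|: ext g. *)
Definition is_power_hypergraph (n k : nat) (E : {set {set 'I_n}}) : Prop :=
  exists (VH : {set 'I_n}) (EH : {set {set 'I_n}}) (ext : {set 'I_n} -> {set 'I_n}),
    [/\ (forall g, g \in EH -> #|g| = 2%N /\ g \subset VH),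
        (forall g, g \in EH -> #|ext g| = (k - 2)%N /\ [disjoint ext g & VH]),
        (forall g g', g \in EH -> g' \in EH -> g != g' -> [disjoint ext g & ext g']),
        (forall v : 'I_n, v \in VH \/ exists2 g, g \in EH & v \in ext g) &
        E = [set g :|: ext g | g in EH]].

Definition deg (n : nat) (E : {set {set 'I_n}}) (i : 'I_n) : nat :=
  #|[set e in E | i \in e]|.

Definition cored (n : nat) (E : {set {set 'I_n}}) (i : 'I_n) : bool := deg E i == 1%N.
Definition intersectional (n : nat) (E : {set {set 'I_n}}) (i : 'I_n) : bool :=
  (1 < deg E i)%N.

(* (L x^{k-1})_i = d_i x_i^{k-1} - sum_{e ∋ i} prod_{s in e \ {i}} x_s *)
Definition lap_apply (R : realType) (n k : nat) (E : {set {set 'I_n}})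
    (x : 'I_n -> R) (i : 'I_n) : R :=
  (deg E i)%:R * x i ^+ (k - 1)
  - \sum_(e in E | i \in e) \prod_(s in e :\ i) x s.

Definition is_H_eigenpair (R : realType) (n k : nat) (E : {set {set 'I_n}})
    (lambda : R) (x : 'I_n -> R) : Prop :=
  (exists i, x i != 0) /\
  forall i, lap_apply k E x i = lambda * x i ^+ (k - 1).

From HB Require Import structures.
From mathcomp Require Import all_boot all_order all_algebra.
From mathcomp Require Import reals.
From mathcomp Require Import zify ring.
Set Implicit Arguments.
Unset Strict Implicit.
Unset Printing Implicit Defensive.

Import Order.TTheory GRing.Theory Num.Theory.
Local Open Scope ring_scope.

(* A cored vertex s lies in exactly one edge e, so the eigen-
   equation at s reads x_s^(k-1) - prod_(e\s) x = lambda x_s^(k-1); multiplying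
   by x_s gives prod_e x = (1 - lambda) x_s^k.  Hence all cored vertices of e
   have the same k-th power, thus (k odd) the same value x_s.  Dividing
   prod_e x by the cored part x_s^(#cored) shows that the product of x over the
   intersectional vertices of e is (1 - lambda) x_s^(#intersectional); with one
   (resp. two) intersectional vertices this makes x_i x_s (resp. x_i x_j) equal
   to (1 - lambda) x_s^2 < 0. *)

Lemma expr_odd_inj (R : realDomainType) (k : nat) (x y : R) :
  odd k -> x ^+ k = y ^+ k -> x = y.
Proof.
move=> k_odd xy; have k_gt0 : (0 < k)%N by case: k k_odd xy.
have [x_ge0 | x_lt0] := lerP 0 x.
  have y_ge0 : 0 <= y by rewrite -(exprn_odd_ge0 _ k_odd) -xy exprn_odd_ge0.
  by apply/eqP; rewrite -(eqrXn2 k_gt0 x_ge0 y_ge0) xy.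
have y_lt0 : y < 0 by rewrite -(exprn_odd_lt0 _ k_odd) -xy exprn_odd_lt0.
have Nx_ge0 : 0 <= - x by rewrite oppr_ge0 ltW.
have Ny_ge0 : 0 <= - y by rewrite oppr_ge0 ltW.
by apply/eqP; rewrite -eqr_opp -(eqrXn2 k_gt0 Nx_ge0 Ny_ge0) (exprNn x) (exprNn y) xy.
Qed.

Lemma card_power_hyperedge (n k : nat) (E : {set {set 'I_n}}) (e : {set 'I_n}) :
  (2 <= k)%N -> is_power_hypergraph k E -> e \in E -> #|e| = k.
Proof.
move=> k_ge2 [VH [EH [ext [EH_pair ext_card _ _ ->]]]] /imsetP [g gEH ->].
have [g2 gVH] := EH_pair g gEH; have [ext_k ext_VH] := ext_card g gEH.
have /disjoint_setI0 g_ext : [disjoint g & ext g].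
  by rewrite disjoint_sym (disjointWr gVH).
by rewrite cardsU g2 ext_k g_ext cards0; lia.
Qed.

Section EdgeOfHEigenvector.

Variables (R : realType) (n k : nat) (E : {set {set 'I_n}}).
Variables (lambda : R) (x : 'I_n -> R).
Hypothesis k_gt0 : (0 < k)%N.
Hypothesis eigen : forall i, lap_apply k E x i = lambda * x i ^+ (k - 1).

Hypothesis k_odd : odd k.
Hypothesis lambda_neq1 : lambda != 1.

Variable e : {set 'I_n}.
Hypothesis eE : e \in E.

Lemma deg_gt0_in_edge t : t \in e -> (0 < deg E t)%N.
Proof. by move=> te; apply/card_gt0P; exists e; rewrite inE eE te. Qed.

Lemma cored_edges s : s \in e -> cored E s -> [set f in E | s \in f] = [set e].
Proof.
move=> se /cards1P [f Ef]; have : e \in [set f in E | s \in f] by rewrite inE eE se.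
by rewrite Ef inE => /eqP <-.
Qed.

Lemma prod_edge_cored s : s \in e -> cored E s ->
  \prod_(t in e) x t = (1 - lambda) * x s ^+ k.
Proof.
move=> se s_cored; have := eigen s; rewrite /lap_apply (eqP s_cored) mul1r.
rewrite (eq_bigl [in [set e]]); last by move=> f; rewrite -(cored_edges se s_cored) !inE.
rewrite big_set1 (big_setD1 s se) /= => eigen_s.
by rewrite -(prednK k_gt0) exprSr -subn1 mulrA mulrBl mul1r -eigen_s; ring.
Qed.

Lemma cored_in_edge_eq s t : s \in e -> cored E s -> t \in e -> cored E t ->
  x t = x s.
Proof.
move=> se s_cored te t_cored; apply: (expr_odd_inj k_odd).
have lambda_gap : 1 - lambda != 0 by rewrite subr_eq0 eq_sym.
by apply: (mulfI lambda_gap); rewrite -!prod_edge_cored.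
Qed.

Lemma not_intersectional_cored t : t \in e -> ~~ intersectional E t -> cored E t.
Proof.
by move=> te; have := deg_gt0_in_edge te; rewrite /intersectional /cored; lia.
Qed.

Lemma prod_intersectional_in_edge s : #|e| = k ->
  s \in e -> cored E s -> x s != 0 ->
  \prod_(v in [set v in e | intersectional E v]) x v
    = (1 - lambda) * x s ^+ #|[set v in e | intersectional E v]|.
Proof.
move=> ek se s_cored xs_neq0; set B := [set v | intersectional E v].
have cored_part : \prod_(t in e :\: B) x t = x s ^+ #|e :\: B|.
  rewrite -prodr_const; apply: eq_bigr => t; rewrite !inE => /andP [t_nint te].
  exact/(cored_in_edge_eq se s_cored te)/not_intersectional_cored.
have := prod_edge_cored se s_cored.
rewrite (big_setID B) cored_part -ek -(cardsID B e) exprD mulrA setIdE.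
by apply: mulIf; rewrite expf_neq0.
Qed.

End EdgeOfHEigenvector.

Theorem corollary4p1 (R : realType) (n k : nat) (E : {set {set 'I_n}})
    (lambda : R) (x : 'I_n -> R) :
  (3 <= k)%N -> odd k ->
  is_power_hypergraph k E ->
  is_H_eigenpair k E lambda x ->
  1 < lambda ->
  forall e, e \in E ->
  (forall i s : 'I_n,
     [set v in e | intersectional E v] = [set i] ->
     s \in e -> cored E s -> x s != 0 ->
     x i * x s < 0) /\
  (forall i j s : 'I_n,
     i != j ->
     [set v in e | intersectional E v] = [set i; j] ->
     s \in e -> cored E s -> x s != 0 ->
     x i * x j < 0).
Proof.
move=> k_ge3 k_odd power [_ eigen] lambda_gt1 e eE.
have k_gt0 : (0 < k)%N by lia.
have ek : #|e| = k by apply: card_power_hyperedge power eE; lia.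
have lambda_neq1 : lambda != 1 by rewrite gt_eqF.
have neg_sq s : x s != 0 -> (1 - lambda) * x s ^+ 2 < 0.
  by move=> xs_neq0; rewrite pmulr_llt0 ?subr_lt0 // exprn_even_gt0 ?xs_neq0 ?orbT.
have prod_int := prod_intersectional_in_edge k_gt0 eigen k_odd lambda_neq1 eE ek.
split=> [i s | i j s ij] int_e se s_cored xs_neq0; have := prod_int s se s_cored xs_neq0;
  rewrite int_e.
- by rewrite big_set1 cards1 => ->; rewrite -mulrA -expr2 neg_sq.
- by rewrite big_setU1 ?big_set1 ?cards2 ?ij ?inE // => ->; rewrite neg_sq.
Qed.
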